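(* Let $n>2$, $V=\mathbb{F}_2^n$, let $g\in\mathrm{Sym}(V)$ and let $\Sigma$ be a Sylow $2$-subgroup of $\mathrm{AGL}(V)$ containing $T^g$. Then $T^g\trianglelefteq\Sigma$ if and only if $T^g\in\{T,T_\Sigma\}$.
   Context: $T=\{\sigma_v:v\in V\}$ with $\sigma_v:x\mapsto x+v$; $\mathrm{AGL}(V)$ is the affine group of $V$. For a Sylow $2$-subgroup $\Sigma$ of $\mathrm{AGL}(V)$, $T_\Sigma$ denotes the unique elementary abelian regular subgroup of $\mathrm{Sym}(V)$ that is contained in and normal in $\Sigma$ and satisfies $|T\cap T_\Sigma|=2^{n-2}$ (its existence and uniqueness is a theorem of the paper). *)

From HB Require Import structures.
From mathcomp Require Import all_boot all_order all_algebra all_fingroup all_solvable.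
Set Implicit Arguments. Unset Strict Implicit. Unset Printing Implicit Defensive.
Import GRing.Theory.
Local Open Scope group_scope.

Definition V (n : nat) : finType := 'rV['F_2]_n.

Definition transl (n : nat) (v : V n) : {perm V n} := perm (@addrI _ v).

Definition T (n : nat) : {set {perm V n}} := [set transl v | v : V n].

Definition AGL (n : nat) : {set {perm V n}} :=
  [set p : {perm V n} | [exists A : 'M['F_2]_n, [exists b : V n,
      (A \in unitmx) && [forall x : V n, p x == (x *m A + b)%R]]]].

Definition regular_subgroup (n : nat) (X : {set {perm V n}}) : bool :=
  group_set X && [transitive X, on [set: V n] | 'P]
  && [forall x : V n, 'C_X[x | 'P] == 1].

Definition isTSigma (n : nat) (Sigma X : {set {perm V n}}) : bool :=
  [&& regular_subgroup X, 2.-abelem X, X <| Sigma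
    & #|T n :&: X| == 2 ^ (n - 2)]%N.

(* T_Sigma: the (by the paper, unique) such subgroup *)
Definition T_Sigma (n : nat) (Sigma : {set {perm V n}}) : {set {perm V n}} :=
  odflt set0 [pick X : {set {perm V n}} | isTSigma Sigma X].

From mathcomp Require Import all_boot all_order all_algebra all_fingroup all_solvable.

(* AGL(V) is the group of affine permutations (p (x + y) = p x + p y + p 0);
   T is normal in it, so T <= Sigma, and the stabiliser Sigma_0 of 0 in Sigma
   acts linearly.  Sigma contains every map x |-> x + eps x with eps additive
   and eps(V) <= D <= ker eps for a Sigma_0-stable subspace D (these maps form
   a 2-group normalised by Sigma); such transvections show that Sigma_0-stable
   subspaces are determined by their order and that Sigma_0 fixes at most one
   nonzero vector.  A subgroup N of Sigma that is normalised by Sigma, regular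
   and elementary abelian ("admissible") is encoded by W = {w | sigma_w in N}
   and an alternating Sigma_0-equivariant form alpha with radical W.  If W <> V
   a fixed-point count yields |V : W| = 4, and alpha is then pinned down by
   Sigma, so such an N is unique.  A normal conjugate T^g <> T is admissible
   with |T :&: T^g| = |W| = 2^(n-2), hence is T_Sigma. *)

Set Implicit Arguments.
Unset Strict Implicit.
Unset Printing Implicit Defensive.
Import GRing.Theory.
Local Open Scope ring_scope.

Section CharTwo.
Variable n : nat.
Local Notation vT := 'rV['F_2]_n.

Lemma F2_cases (a : 'F_2) : a = 0 \/ a = 1.
Proof.
case: a => [[|[|m]]] H; [left | right | by []].
- exact: val_inj.
- exact: val_inj.
Qed.

Lemma F2_addxx (a : 'F_2) : a + a = 0.
Proof. by case: (F2_cases a) => ->; [exact: addr0 | exact: val_inj]. Qed.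

Lemma entryD (a b : vT) i j : (a + b) i j = a i j + b i j.
Proof. by rewrite mxE. Qed.

Lemma entry0 i j : (0 : vT) i j = 0.
Proof. by rewrite mxE. Qed.

Lemma addvv (x : vT) : x + x = 0.
Proof. by apply/rowP => i; rewrite !mxE F2_addxx. Qed.

Lemma addvK (x y : vT) : y + x + x = y.
Proof. by rewrite -addrA addvv addr0. Qed.

Lemma oppv (x : vT) : - x = x.
Proof. by apply: (addrI x); rewrite addrN addvv. Qed.

Lemma card_vT : #|[set: vT]| = (2 ^ n)%N.
Proof. by rewrite cardsT card_mx card_Fp // mul1n. Qed.

End CharTwo.

(* Proves an identity between sums of vectors of F_2^n by checking it entrywise
   on all 0/1 values of the entries involved. *)
Ltac char2 := let i := fresh "i" in apply/rowP => i; rewrite ?entryD ?entry0;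
  repeat (match goal with |- context [fun_of_matrix ?t ?k i] =>
     case: (F2_cases (fun_of_matrix t k i)) => -> end);
  apply: val_inj; reflexivity.

Section Translations.
Variable n : nat.
Local Notation vT := 'rV['F_2]_n.
Local Notation P := {perm V n}.
Local Open Scope group_scope.

(* Application of a permutation of V, as a head symbol convenient for
   rewriting, and its interaction with the group structure of {perm V}. *)
Definition ap (p : P) (x : vT) : vT := p x.

Lemma apM (p q : P) x : ap (p * q) x = ap q (ap p x).
Proof. by rewrite /ap permM. Qed.

Lemma ap1 x : ap 1 x = x.
Proof. by rewrite /ap perm1. Qed.

Lemma apK (p : P) x : ap p^-1 (ap p x) = x.
Proof. by rewrite /ap permK. Qed.

Lemma apKV (p : P) x : ap p (ap p^-1 x) = x.
Proof. by rewrite /ap permKV. Qed.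

Lemma ap_inj (p : P) : injective (ap p).
Proof. exact: perm_inj. Qed.

Lemma perm_ext (p q : P) : (forall x, ap p x = ap q x) -> p = q.
Proof. by move=> E; apply/permP => x; apply: E. Qed.

Lemma ap_transl v x : ap (transl v) x = v + x.
Proof. by rewrite /ap /transl permE. Qed.

Lemma transl0 : transl (0 : vT) = 1.
Proof. by apply: perm_ext => x; rewrite ap_transl ap1 add0r. Qed.

Lemma translD (v w : vT) : transl (v + w) = transl v * transl w.
Proof. by apply: perm_ext => x; rewrite apM !ap_transl addrCA addrA. Qed.

Lemma transl_inj : injective (@transl n).
Proof. by move=> v w E; have := ap_transl v 0; rewrite E ap_transl !addr0. Qed.

Lemma translV (v : vT) : (transl v)^-1 = transl v.
Proof. by apply: (mulgI (transl v)); rewrite mulgV -translD addvv transl0. Qed.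

Lemma group_set_T : group_set (T n).
Proof.
apply/group_setP; split; first by apply/imsetP; exists 0; rewrite ?transl0.
move=> p q /imsetP [v _ ->] /imsetP [w _ ->]; apply/imsetP; exists (v + w) => //.
by rewrite translD.
Qed.
Canonical T_group := group group_set_T.

Lemma card_T : #|T n| = (2 ^ n)%N.
Proof. by rewrite card_imset ?card_mx ?card_Fp ?mul1n //; exact: transl_inj. Qed.

Lemma T_mulxx x : x \in T n -> x * x = 1.
Proof. by case/imsetP => v _ ->; rewrite -translD addvv transl0. Qed.

Lemma T_abelem : (2.-abelem (T n))%g.
Proof.
apply/(abelemP (isT : prime 2)); split; last first.
  by move=> x xT; rewrite expgS expg1 T_mulxx.
apply/centsP => x /imsetP [v _ ->] y /imsetP [w _ ->].
by rewrite /commute -!translD addrC.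
Qed.

End Translations.

Section AffineGroup.
Variable n : nat.
Local Notation vT := 'rV['F_2]_n.
Local Notation P := {perm V n}.

Definition affine (p : P) := forall x y : vT, ap p (x + y) = ap p x + ap p y + ap p 0.

(* Over F_2 an additive map of V is linear, hence given by a matrix. *)
Lemma additive_mulmx (L : vT -> vT) : (forall x y, L (x + y) = L x + L y) ->
  exists A : 'M['F_2]_n, forall x, L x = x *m A.
Proof.
move=> LD.
have L0 : L 0 = 0 by apply: (addrI (L 0)); rewrite -LD !addr0.
have Lsc (a : 'F_2) x : L (a *: x) = a *: L x.
  by case: (F2_cases a) => ->; rewrite ?scale0r ?scale1r.
pose A := (\matrix_(i < n) L (delta_mx ord0 i) : 'M['F_2]_n).
exists A => x; rewrite mulmx_sum_row.
have dec : x = \sum_i x ord0 i *: delta_mx ord0 i.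
  apply/rowP => j; rewrite summxE (bigD1 j) //= big1 ?addr0.
    by rewrite !mxE !eqxx mulr1.
  by move=> i ij; rewrite !mxE eqxx /= eq_sym (negbTE ij) mulr0.
transitivity (\sum_i x ord0 i *: L (delta_mx ord0 i)); last first.
  by apply: eq_bigr => i _; rewrite rowK.
rewrite {1}dec; elim/big_rec2: _ => [|i y1 y2 _ IH]; first by rewrite L0.
by rewrite LD Lsc IH.
Qed.

Lemma AGL_affine p : p \in AGL n <-> affine p.
Proof.
split.
  rewrite inE => /existsP [A /existsP [b /andP [_ /forallP H]]] x y.
  have E z : ap p z = z *m A + b by apply/eqP; apply: H.
  by rewrite !E mulmxDl mul0mx add0r; char2.
move=> pA; set L := fun x => ap p x + ap p 0.
have LD x y : L (x + y) = L x + L y by rewrite /L pA; char2.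
have [A HA] := additive_mulmx LD.
have Linj : injective L by move=> x y; rewrite /L => /addIr /ap_inj.
pose Li y := ap p^-1 (y + ap p 0).
have LLi y : L (Li y) = y by rewrite /L /Li apKV addvK.
have LiD x y : Li (x + y) = Li x + Li y by apply: Linj; rewrite LD !LLi.
have [B HB] := additive_mulmx LiD.
rewrite inE; apply/existsP; exists A; apply/existsP; exists (ap p 0).
apply/andP; split; last by apply/forallP => x; rewrite -HA /L addvK.
have BA : B *m A = 1%:M.
  by apply/row_matrixP => i; rewrite !rowE mulmxA -HA -HB LLi mulmx1.
by case: (mulmx1_unit BA).
Qed.

(* Affine maps are closed under composition, so AGL(V) is a group. *)
Lemma group_set_AGL : group_set (AGL n).
Proof.
apply/group_setP; split; first by apply/AGL_affine => x y; rewrite !ap1; char2.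
move=> p q /AGL_affine pA /AGL_affine qA; apply/AGL_affine => x y.
by rewrite !apM pA qA qA; char2.
Qed.
Canonical AGL_group := group group_set_AGL.

Lemma conj_transl_affine (p : P) v : affine p ->
  (p^-1 * transl v * p)%g = transl (ap p v + ap p 0).
Proof.
move=> pA; apply: perm_ext => x; rewrite !apM ap_transl addrC pA apKV ap_transl.
by char2.
Qed.

Lemma T_normal_AGL : (T n <| AGL n)%g.
Proof.
rewrite /normal; apply/andP; split.
  apply/subsetP => p /imsetP [v _ ->]; apply/AGL_affine => x y.
  by rewrite !ap_transl; char2.
apply/subsetP => p /AGL_affine pA; rewrite inE; apply/subsetP => q.
case/imsetP => r /imsetP [v _ ->] ->.
by rewrite /conjg mulgA conj_transl_affine //; apply/imsetP; exists (ap p v + ap p 0).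
Qed.

End AffineGroup.

Section Subspaces.
Variable n : nat.
Local Notation vT := 'rV['F_2]_n.

Lemma separating_functional (D : {group vT}) (x : vT) : x \notin D ->
  exists lam : vT -> 'F_2, [/\ forall a b, lam (a + b) = lam a + lam b,
     forall d, d \in D -> lam d = 0 & lam x = 1].
Proof.
move=> xD.
pose M := (\matrix_(i < #|D|) (enum_val i : vT)) : 'M['F_2]_(#|D|, n).
have subM v : (v <= M)%MS -> v \in D.
  case/submxP => u ->; rewrite mulmx_sum_row.
  apply: (big_ind (fun w : vT => w \in D)); [exact: (group1 D) | exact: (@groupM _ D) |].
  move=> i _; rewrite rowK; case: (F2_cases (u ord0 i)) => ->.
    by rewrite scale0r; exact: (group1 D).
  by rewrite scale1r; apply: enum_valP.
have Msub d : d \in D -> (d <= M)%MS.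
  by move=> dD; have := row_sub (enum_rank_in dD d) M; rewrite rowK enum_rankK_in.
have /existsP [j xMj] : [exists j, (x *m cokermx M) ord0 j != 0].
  apply: contraR xD => /existsPn xM0; apply: subM; rewrite submxE.
  by apply/eqP/rowP => j; rewrite entry0; apply/eqP; move: (xM0 j); rewrite negbK.
exists (fun v => (v *m cokermx M) ord0 j); split.
- by move=> a b; rewrite mulmxDl entryD.
- by move=> d /Msub; rewrite submxE => /eqP ->; rewrite entry0.
- by case: (F2_cases ((x *m cokermx M) ord0 j)) xMj => -> // /eqP.
Qed.

(* ext H a = H + <a>, the subspace spanned by H and a. *)
Definition ext (H : {set vT}) (a : vT) : {set vT} := [set x | (x \in H) || (x + a \in H)].

Lemma extE (H : {set vT}) a x : (x \in ext H a) = (x \in H) || (x + a \in H).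
Proof. by rewrite inE. Qed.

Lemma group_set_ext (H : {group vT}) a : group_set (ext H a).
Proof.
have HD x y : x \in H -> y \in H -> x + y \in H by exact: (@groupM _ H).
apply/group_setP; split; first by rewrite extE (group1 H).
move=> x y; rewrite !extE -[(x * y)%g]/(x + y) => /orP [xH|xH] /orP [yH|yH].
- by rewrite HD.
- by rewrite (_ : x + y + a = x + (y + a) :> vT); [rewrite (HD _ _ xH yH) orbT | char2].
- by rewrite (_ : x + y + a = (x + a) + y :> vT); [rewrite (HD _ _ xH yH) orbT | char2].
- by rewrite (_ : x + y = (x + a) + (y + a) :> vT); [rewrite (HD _ _ xH yH) | char2].
Qed.
Canonical ext_group (H : {group vT}) a := group (group_set_ext H a).

Lemma ext_sub (H : {set vT}) a : H \subset ext H a.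
Proof. by apply/subsetP => x xH; rewrite extE xH. Qed.

Lemma ext_mem (H : {group vT}) a : a \in ext H a.
Proof. by rewrite extE addvv (group1 H) orbT. Qed.

Lemma card_ext (H : {group vT}) a : a \notin H -> #|ext H a| = (2 * #|H|)%N.
Proof.
move=> aH.
have -> : ext H a = H :|: [set x + a | x in H].
  apply/setP => x; rewrite !inE; congr (_ || _).
  apply/idP/imsetP => [xa|[y yH ->]]; first by exists (x + a) => //; rewrite addvK.
  by rewrite addvK.
rewrite cardsU card_imset; last by move=> x y /addIr.
have -> : H :&: [set x + a | x in H] = set0.
  apply/setP => x; rewrite !inE; apply/negP => /andP [xH /imsetP [y yH exy]].
  move/negP: aH; apply; rewrite (_ : a = x + y); first exact: (@groupM _ H).
  by rewrite exy; char2.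
by rewrite cards0 subn0 mul2n addnn.
Qed.

Lemma additive_vanish (H : {set vT}) f g (h : vT -> vT) :
  (forall x, x \in ext (ext H f) g) -> (forall a b, h (a + b) = h a + h b) ->
  (forall w, w \in H -> h w = 0) -> h f = 0 -> h g = 0 -> forall x, h x = 0.
Proof.
move=> cov hD hH hf hg x.
have hs a y : h y = h (y + a) + h a by rewrite hD addvK.
move: (cov x); rewrite !extE => /orP [/orP [xH|xfH]|/orP [xgH|xgfH]].
- exact: hH.
- by rewrite (hs f) hH // hf addr0.
- by rewrite (hs g) hH // hg addr0.
- by rewrite (hs g) (hs f (x + g)) hH // hf hg !addr0.
Qed.

End Subspaces.

Section SylowSubgroup.
Variable n : nat.
Local Notation vT := 'rV['F_2]_n.
Local Notation P := {perm V n}.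
Variable Sigma : {group P}.
Hypothesis SylS : (2.-Hall(AGL n) Sigma)%g.

(* A normal p-subgroup lies in every Sylow p-subgroup. *)
Lemma T_sub_Sigma : T n \subset Sigma.
Proof.
apply: (normal_sub_max_pgroup (Hall_max SylS)) (T_normal_AGL n).
by rewrite /pgroup card_T pnatX pnat_id.
Qed.

Lemma T_normal_Sigma : (T n <| Sigma)%g.
Proof.
rewrite /normal T_sub_Sigma; case/andP: (T_normal_AGL n) => _.
exact: subset_trans (pHall_sub SylS).
Qed.

Lemma transl_Sigma v : transl v \in Sigma.
Proof. by apply: (subsetP T_sub_Sigma); apply/imsetP; exists v. Qed.

Lemma Sigma_affine p : p \in Sigma -> affine p.
Proof. by move=> pS; apply/AGL_affine; apply: (subsetP (pHall_sub SylS)). Qed.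

Lemma stab0_additive u : u \in Sigma -> ap u 0 = 0 ->
  forall x y, ap u (x + y) = ap u x + ap u y.
Proof. by move=> uS u0 x y; rewrite (Sigma_affine uS) u0 addr0. Qed.

Definition linpart (p : P) : P := (p * transl (ap p 0))%g.

Lemma ap_linpart p x : ap (linpart p) x = ap p 0 + ap p x.
Proof. by rewrite /linpart apM ap_transl. Qed.

Lemma linpart_Sigma p : p \in Sigma -> linpart p \in Sigma.
Proof. by move=> pS; rewrite groupM ?transl_Sigma. Qed.

Lemma linpart0 p : ap (linpart p) 0 = 0.
Proof. by rewrite ap_linpart addvv. Qed.

Definition stable (D : {set vT}) := forall u, u \in Sigma -> ap u 0 = 0 ->
  forall d, d \in D -> ap u d \in D.

Definition defect (p : P) (x : vT) : vT := ap p x + ap p 0 + x.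

Lemma defectE p x : ap p x = defect p x + ap p 0 + x.
Proof. by rewrite /defect; char2. Qed.

Section ElementaryMaps.
Variable D : {group vT}.
Hypothesis stD : stable D.

Definition elementary : {set P} :=
  [set p : P | [forall x, forall y, defect p (x + y) == defect p x + defect p y]
   && [forall x, defect p x \in D] && [forall d in D, defect p d == 0]].

Lemma elementaryP p : reflect
  [/\ forall x y, defect p (x + y) = defect p x + defect p y,
      forall x, defect p x \in D & forall d, d \in D -> defect p d = 0]
  (p \in elementary).
Proof.
rewrite inE; apply: (iffP idP).
  case/andP => [/andP [/forallP H1 /forallP H2] /forallP H3]; split.
  - by move=> x y; apply/eqP; move/forallP: (H1 x); apply.
  - exact: H2.
  - by move=> d dD; apply/eqP; move: (H3 d); rewrite dD.
case=> H1 H2 H3; apply/andP; split; first (apply/andP; split).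
- by apply/forallP => x; apply/forallP => y; rewrite H1.
- by apply/forallP.
- by apply/forallP => d; apply/implyP => dD; rewrite H3.
Qed.

(* The defects of a product add up, since defects take values in D = ker. *)
Lemma group_set_elementary : group_set elementary.
Proof.
apply/group_setP; split.
  apply/elementaryP; split.
  - by move=> x y; rewrite /defect !ap1; char2.
  - by move=> x; rewrite /defect !ap1 addr0 addvv group1.
  - by move=> d _; rewrite /defect !ap1 addr0 addvv.
move=> p q /elementaryP [pD pin pk] /elementaryP [qD qin qk].
have E x : defect (p * q)%g x = defect p x + defect q x.
  rewrite {1}/defect !apM (defectE q (ap p x)) (defectE q (ap p 0)) (defectE p x).
  rewrite (qD (defect p x + ap p 0) x) (qD (defect p x) (ap p 0)) (qk _ (pin x)).
  by char2.
apply/elementaryP; split.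
- by move=> x y; rewrite !E pD qD; char2.
- by move=> x; rewrite E groupM.
- by move=> d dD; rewrite E pk ?qk ?addr0.
Qed.
Canonical elementary_group := group group_set_elementary.

Lemma elementary_AGL : elementary \subset AGL n.
Proof.
apply/subsetP => p /elementaryP [pD _ _]; apply/AGL_affine => x y.
by rewrite (defectE p (x + y)) (defectE p x) (defectE p y) pD; char2.
Qed.

Lemma elementary_expg4 p : p \in elementary -> (p ^+ 4)%g = 1%g.
Proof.
case/elementaryP => pD pin pk.
have E2 x : ap (p ^+ 2)%g x = defect p (ap p 0) + x.
  rewrite expgS expg1 apM (defectE p (ap p x)) (defectE p x).
  rewrite (pD (defect p x + ap p 0) x) (pD (defect p x) (ap p 0)) (pk _ (pin x)).
  by char2.
apply: perm_ext => x.
by rewrite (_ : 4 = 2 * 2)%N // expgM expgS expg1 apM !E2 ap1; char2.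
Qed.

Lemma pgroup_elementary : (2.-group elementary)%g.
Proof.
rewrite -[elementary]/(gval elementary_group) -pnat_exponent.
apply: (@pnat_dvd _ 4) => //; apply/exponentP => p; exact: elementary_expg4.
Qed.

(* Conjugation by an element s of Sigma transports the defect by the linear
   part of s, which preserves D. *)
Lemma Sigma_norm_elementary : Sigma \subset 'N(elementary)%g.
Proof.
apply/subsetP => s sS; rewrite inE; apply/subsetP => k'.
case/imsetP => k /elementaryP [kD kin kk] ->.
have sA := Sigma_affine sS.
have sVS : s^-1%g \in Sigma by rewrite groupV.
pose L := ap (linpart s); pose L' := ap (linpart s^-1).
have LD x y : L (x + y) = L x + L y.
  by apply: stab0_additive; rewrite ?linpart_Sigma ?linpart0.
have L'D x y : L' (x + y) = L' x + L' y.
  by apply: stab0_additive; rewrite ?linpart_Sigma ?linpart0.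
have LL' x : L (L' x) = x.
  rewrite /L /L' !ap_linpart (addrC (ap s^-1 0)) sA !apKV addr0; char2.
have E x : defect (k ^ s)%g x = L (defect k (L' x)).
  rewrite /conjg {1}/defect !apM.
  rewrite (defectE k (ap s^-1 x)) (defectE k (ap s^-1 0)).
  rewrite (sA (defect k (ap s^-1 x) + ap k 0) (ap s^-1 x)).
  rewrite (sA (defect k (ap s^-1 x)) (ap k 0)).
  rewrite (sA (defect k (ap s^-1 0) + ap k 0) (ap s^-1 0)).
  rewrite (sA (defect k (ap s^-1 0)) (ap k 0)) !apKV.
  have -> : L' x = ap s^-1 x + ap s^-1 0 by rewrite /L' ap_linpart addrC.
  by rewrite kD /L ap_linpart (sA (defect k (ap s^-1 x))); char2.
apply/elementaryP; split.
- by move=> x1 x2; rewrite !E L'D kD LD.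
- by move=> x; rewrite E /L; apply: stD; rewrite ?linpart_Sigma ?linpart0.
- move=> d dD; rewrite E kk; first exact: linpart0.
  by rewrite /L'; apply: stD; rewrite ?linpart_Sigma ?linpart0.
Qed.

(* Hence Sigma * elementary is a 2-subgroup of AGL(V) containing Sigma. *)
Lemma elementary_sub_Sigma : elementary \subset Sigma.
Proof.
have SK : (Sigma <*> elementary_group)%G :=: Sigma.
  apply: (sub_pHall SylS); last 2 first.
  - exact: joing_subl.
  - by rewrite join_subG (pHall_sub SylS) elementary_AGL.
  rewrite /= norm_joinEl ?Sigma_norm_elementary //.
  by rewrite pgroupM (pHall_pgroup SylS) pgroup_elementary.
by rewrite -SK joing_subr.
Qed.

Lemma elementary_map_in_Sigma (eps : vT -> vT) :
  (forall x y, eps (x + y) = eps x + eps y) ->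
  (forall x, eps x \in D) -> (forall d, d \in D -> eps d = 0) ->
  exists2 u, u \in Sigma & forall x, ap u x = x + eps x.
Proof.
move=> eD ein ek.
have e0 : eps 0 = 0 by apply: (addrI (eps 0)); rewrite -eD !addr0.
have inj : injective (fun x => x + eps x).
  move=> x y /= Exy.
  have := congr1 eps Exy; rewrite !eD (ek _ (ein x)) (ek _ (ein y)) !addr0 => exy.
  by move: Exy; rewrite exy => /addIr.
have ape x : ap (perm inj) x = x + eps x by rewrite /ap permE.
exists (perm inj); last exact: ape.
apply: (subsetP elementary_sub_Sigma); apply/elementaryP.
have epe x : defect (perm inj) x = eps x by rewrite /defect !ape e0 addr0; char2.
split=> [x y|x|d dD]; rewrite !epe; [exact: eD | exact: ein | exact: ek].
Qed.

End ElementaryMaps.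

Lemma transvection (D E : {group vT}) x y : stable D -> D \subset E ->
  y \in D -> x \notin E ->
  exists u, [/\ u \in Sigma, ap u 0 = 0, ap u x = x + y
              & forall e, e \in E -> ap u e = e].
Proof.
move=> stD sDE yD xE.
have [lam [lD lE lx]] := separating_functional xE.
have [|||u uS uE] := elementary_map_in_Sigma stD (eps := fun z => lam z *: y).
- by move=> a b; rewrite lD scalerDl.
- move=> z; case: (F2_cases (lam z)) => ->; last by rewrite scale1r.
  by rewrite scale0r; exact: (group1 D).
- by move=> d dD; rewrite lE ?scale0r // (subsetP sDE).
have lE0 e : e \in E -> ap u e = e by move=> eE; rewrite uE lE ?scale0r ?addr0.
exists u; split => //; last by rewrite uE lx scale1r.
by apply: lE0; exact: (group1 E).
Qed.

Lemma stable_eq (D1 D2 : {group vT}) : stable D1 -> stable D2 -> #|D1| = #|D2| ->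
  D1 :=: D2.
Proof.
move=> st1 st2 c12; apply/eqP; rewrite eqEcard c12 leqnn andbT.
apply/negPn/negP => n12.
have n21 : ~~ (D2 \subset D1).
  apply: contra n12 => s21; suff /eqP-> : D1 :==: D2 by [].
  by rewrite eq_sym eqEcard s21 c12 leqnn.
have [y y1 y2] := subsetPn n12; have [x x2 x1] := subsetPn n21.
have [u [uS u0 uxy _]] := transvection st1 (subxx D1) y1 x1.
move/negP: y2; apply; move: (st2 u uS u0 x x2); rewrite uxy => xy2.
by rewrite (_ : y = (x + y) + x); [exact: (@groupM _ D2) | char2].
Qed.

Lemma fixed_vector_unique (z z' : vT) : z != 0 -> z' != 0 ->
  (forall u, u \in Sigma -> ap u 0 = 0 -> ap u z = z) ->
  (forall u, u \in Sigma -> ap u 0 = 0 -> ap u z' = z') -> z = z'.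
Proof.
move=> nz nz' fz fz'; apply/eqP/negPn/negP => zz'.
pose D := ext_group 1%G z.
have inD x : (x \in D) = (x == 0) || (x + z == 0) by rewrite !inE.
have stD : stable D.
  move=> u uS u0 d; rewrite !inD => /orP [/eqP ->|/eqP dz]; first by rewrite u0 eqxx.
  have -> : d = z by move: dz; rewrite -(addvv z) => /addIr.
  by rewrite fz // addvv eqxx orbT.
have z'D : z' \notin D.
  rewrite inD negb_or nz' /=; apply: contra zz' => /eqP E.
  by apply/eqP; move: E; rewrite -(addvv z') => /addrI.
have [u [uS u0 uz' _]] := transvection stD (subxx D) (ext_mem _ _) z'D.
by move/eqP: nz; apply; apply: (addrI z'); rewrite -uz' fz' ?addr0.
Qed.

End SylowSubgroup.

Section StableCoset.
Variable n : nat.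
Local Notation vT := 'rV['F_2]_n.
Local Notation P := {perm V n}.
Variable Sigma : {group P}.
Hypothesis SylS : (2.-Hall(AGL n) Sigma)%g.
Variable W : {group vT}.
Hypothesis stW : stable Sigma W.

Local Notation Sigma0 := ('C_Sigma[(0 : V n) | 'P])%G.

Lemma Sigma0P u : u \in Sigma0 -> u \in Sigma /\ ap u 0 = 0.
Proof. by case/setIP => uS /astab1P u0; split. Qed.

Lemma Sigma0_coset u x : u \in Sigma0 -> ('P^*)%act (W :* x)%g u = (W :* ap u x)%g.
Proof.
case/Sigma0P => uS u0; have uD := stab0_additive SylS uS u0.
have uWeq : [set ap u w | w in W] = W.
  apply/eqP; rewrite eqEcard card_imset; last exact: ap_inj.
  by rewrite leqnn andbT; apply/subsetP => y /imsetP [w wW ->]; apply: stW.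
rewrite /= /setact; apply/setP => y; apply/imsetP/idP.
  case=> z; rewrite mem_rcoset => zW ->; rewrite mem_rcoset.
  have -> : (ap u z * (ap u x)^-1)%g = ap u (z * x^-1)%g.
    by change (ap u z - ap u x = ap u (z - x)); rewrite !oppv uD.
  exact: stW.
rewrite mem_rcoset => yW; rewrite -uWeq in yW; case/imsetP: yW => w wW E.
exists (w * x)%g; first by rewrite mem_rcoset mulgK.
move: E; change ((y * (ap u x)^-1)%g) with (y - ap u x); rewrite oppv => E.
by change (y = ap u (w + x)); rewrite uD -E; char2.
Qed.

Lemma cosets_even : ~~ ([set: vT] \subset W) -> (2 %| #|rcosets W [set: vT]|)%N.
Proof.
move=> nW; rewrite -/(indexg _ _).
have dvd2n : (#|[set: vT] : W|%g %| 2 ^ n)%N by rewrite -(card_vT n); apply: dvdn_indexg.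
have idx_gt1 : (1 < #|[set: vT] : W|%g)%N by rewrite indexg_gt1.
case/dvdn_pfactor: dvd2n => // [[|m]] _ E; first by rewrite E in idx_gt1.
by rewrite E expnS dvdn_mulr.
Qed.

(* If W <> V, Sigma_0 stabilises a coset f + W <> W, as the 2-group Sigma_0
   acting on the even number of cosets fixes W, hence fixes another coset. *)
Lemma stable_coset : ~~ ([set: vT] \subset W) ->
  exists f, f \notin W /\ forall u, u \in Sigma -> ap u 0 = 0 -> ap u f + f \in W.
Proof.
move=> nW.
have p2S0 : (2.-group Sigma0)%g by apply: pgroupS (pHall_pgroup SylS); apply: subsetIl.
pose C := rcosets W [set: vT].
have actC : [acts Sigma0, on C | 'P^*].
  apply/subsetP => u uU; rewrite !inE; apply/subsetP => _ /imsetP [x _ ->].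
  by rewrite inE rcosetE Sigma0_coset //; apply/imsetP; exists (ap u x); rewrite ?inE ?rcosetE.
set F := ('Fix_(C | 'P^*)(Sigma0))%g.
have WF : (W : {set vT}) \in F.
  rewrite inE; apply/andP; split.
    by apply/imsetP; exists 0; rewrite ?inE // rcosetE -[0]/(1%g : vT) rcoset1.
  apply/afixP => u uU; have := Sigma0_coset 0 uU.
  by rewrite -[0]/(1%g : vT) rcoset1 => ->; case: (Sigma0P uU) => _ ->; rewrite rcoset1.
have F2 : (2 %| #|F|)%N.
  by move: (cosets_even nW); rewrite /dvdn (pgroup_fix_mod p2S0 actC).
have : (0 < #|F :\ (W : {set vT})|)%N.
  by move: F2; rewrite (cardsD1 (W : {set vT}) F) WF; case: #|F :\ _|.
case/card_gt0P => Cf /setD1P [CW /setIP [/imsetP [f _ Cf_def] /afixP Cfix]].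
rewrite {}Cf_def in CW Cfix.
exists f; split; first by apply: contra CW => fW; rewrite rcosetE rcoset_id.
move=> u uS u0.
have uU : u \in Sigma0 by rewrite inE uS; apply/astab1P.
have := Cfix u uU; rewrite rcosetE Sigma0_coset // => E.
have : ap u f \in (W :* ap u f)%g by rewrite rcoset_refl.
by rewrite E mem_rcoset -[(_ * _^-1)%g]/(ap u f - f) oppv.
Qed.

End StableCoset.

Section AdmissibleSubgroups.
Variable n : nat.
Local Notation vT := 'rV['F_2]_n.
Local Notation P := {perm V n}.
Variable Sigma : {group P}.
Hypothesis SylS : (2.-Hall(AGL n) Sigma)%g.

Definition admissible (N : {set P}) :=
  [/\ N \subset Sigma, Sigma \subset 'N(N)%g, abelian N,
      forall v, v \in N -> (v * v = 1)%g &
      (forall b, exists2 v, v \in N & ap v 0 = b) /\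
      (forall v v', v \in N -> v' \in N -> ap v 0 = ap v' 0 -> v = v')].

Definition tvecs (N : {set P}) : {set vT} := [set w | transl w \in N].

Definition nu (N : {set P}) (b : vT) : P := odflt 1%g [pick v in N | ap v 0 == b].

Definition alpha (N : {set P}) (b x : vT) : vT := ap (nu N b) x + x + b.

Lemma capT_tvecs (N : {set P}) : #|T n :&: N| = #|tvecs N|.
Proof.
have -> : T n :&: N = [set transl v | v in tvecs N].
  apply/setP => x; rewrite inE; apply/andP/imsetP.
    by case=> /imsetP [v _ ->] vN; exists v; rewrite ?inE.
  by case=> v; rewrite inE => vN ->; split => //; apply/imsetP; exists v.
by rewrite card_imset //; apply: transl_inj.
Qed.

Lemma card_admissible (N : {set P}) : admissible N -> (#|N| <= 2 ^ n)%N.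
Proof.
case=> _ _ _ _ [_ uq].
have inj : {in N &, injective (fun v : P => ap v 0)} by move=> v v' vN v'N; apply: uq.
by rewrite -(card_vT n) -(card_in_imset inj) subset_leq_card ?subsetT.
Qed.

Lemma tvecs_full (N : {set P}) : admissible N -> [set: vT] \subset tvecs N -> N = T n.
Proof.
move=> aN sW.
have TN : T n \subset N.
  by apply/subsetP => x /imsetP [v _ ->]; move: (subsetP sW v); rewrite !inE; apply.
by apply/eqP; rewrite eq_sym eqEcard TN card_T card_admissible.
Qed.

Variable N : {group P}.
Hypothesis admN : admissible N.

Lemma group_set_tvecs : group_set (tvecs N).
Proof.
apply/group_setP; split; first by rewrite inE transl0.
by move=> x y; rewrite !inE -[(x * y)%g]/(x + y) translD; exact: groupM.
Qed.
Canonical tvecs_group := group group_set_tvecs.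

Lemma nuP b : nu N b \in N /\ ap (nu N b) 0 = b.
Proof.
rewrite /nu; case: pickP => [v /andP [vN /eqP vb]|H] //=.
case: admN => _ _ _ _ [reg _]; case: (reg b) => v vN vb.
by move: (H v); rewrite vN vb eqxx.
Qed.

Lemma nuN b : nu N b \in N. Proof. by case: (nuP b). Qed.
Lemma nu0 b : ap (nu N b) 0 = b. Proof. by case: (nuP b). Qed.

Lemma nu_eq v : v \in N -> v = nu N (ap v 0).
Proof. by case: admN => _ _ _ _ [_ uq] vN; apply: uq; rewrite ?nuN ?nu0. Qed.

Lemma nuE b x : ap (nu N b) x = alpha N b x + x + b.
Proof. by rewrite /alpha; char2. Qed.

(* alpha b is additive, as nu b is affine. *)
Lemma alpha_additive b x y : alpha N b (x + y) = alpha N b x + alpha N b y.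
Proof.
have nuS : nu N b \in Sigma by case: admN => sNS _ _ _ _; rewrite (subsetP sNS) ?nuN.
by rewrite /alpha (Sigma_affine SylS nuS x y) nu0; char2.
Qed.

(* nu b commutes with the translations in N, so alpha b vanishes on W. *)
Lemma alpha_tvecs b w : w \in tvecs N -> alpha N b w = 0.
Proof.
rewrite inE => wN; case: admN => _ _ cNN _ _.
have : commute (transl w) (nu N b) by apply: (centsP cNN); rewrite ?nuN.
move/(congr1 (fun p => ap p 0)); rewrite !apM ap_transl addr0 nu0 ap_transl.
by rewrite /alpha => ->; char2.
Qed.

(* N is normalised by the translation sigma_v, which forces alpha b v in W. *)
Lemma alpha_in_tvecs b v : alpha N b v \in tvecs N.
Proof.
rewrite inE; case: admN => _ nNS _ _ _.
have : (nu N b ^ transl v)%g \in N.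
  by rewrite memJ_norm ?nuN // (subsetP nNS) ?transl_Sigma.
have -> : (nu N b ^ transl v)%g = (nu N b * transl (alpha N b v))%g.
  apply: perm_ext => x; rewrite /conjg !apM translV !ap_transl.
  have nuS : nu N b \in Sigma by case: admN => sNS _ _ _ _; rewrite (subsetP sNS) ?nuN.
  by rewrite (Sigma_affine SylS nuS v x) nu0 /alpha; char2.
by move=> H; rewrite -(mulKg (nu N b) (transl _)) groupM ?groupV ?nuN.
Qed.

(* alpha b only depends on the coset b + W, as nu (b + w) = nu b * sigma_w. *)
Lemma alpha_shift b w x : w \in tvecs N -> alpha N (b + w) x = alpha N b x.
Proof.
rewrite inE => wN.
have nu_shift : nu N (b + w) = (nu N b * transl w)%g.
  by rewrite (nu_eq (groupM (nuN b) wN)) apM nu0 ap_transl addrC.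
by rewrite /alpha nu_shift apM ap_transl; char2.
Qed.

(* alpha is additive in its first argument: nu b * nu c = nu (b + c + alpha c b). *)
Lemma alpha_additive_l b c x : alpha N (b + c) x = alpha N b x + alpha N c x.
Proof.
have -> : b + c = (alpha N c b + b + c) + alpha N c b by char2.
rewrite alpha_shift ?alpha_in_tvecs //.
have nu_mul : (nu N b * nu N c)%g = nu N (alpha N c b + b + c).
  by rewrite (nu_eq (groupM (nuN b) (nuN c))) apM nu0 nuE.
have := congr1 (fun p => ap p x) nu_mul; rewrite apM /= => E.
rewrite {1}/alpha -E (nuE c) (nuE b x) (alpha_additive c (alpha N b x + x) b).
by rewrite (alpha_additive c (alpha N b x) x) (alpha_tvecs c (alpha_in_tvecs b x)); char2.
Qed.

(* N is abelian: alpha is symmetric. *)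
Lemma alpha_sym b c : alpha N c b = alpha N b c.
Proof.
case: admN => _ _ cNN _ _.
have : commute (nu N b) (nu N c) by apply: (centsP cNN); rewrite ?nuN.
move/(congr1 (fun p => ap p 0)); rewrite !apM !nu0 !nuE => E.
by apply: (addIr (b + c)); move: E; rewrite !addrA => ->; char2.
Qed.

(* N has exponent 2: alpha is alternating. *)
Lemma alpha_alt b : alpha N b b = 0.
Proof.
case: admN => _ _ _ N2 _.
have := congr1 (fun p => ap p 0) (N2 _ (nuN b)).
by rewrite apM !nu0 ap1 nuE => E; apply: (addIr (b + b)); rewrite addrA E; char2.
Qed.

Lemma alpha_radical b : (forall x, alpha N b x = 0) -> b \in tvecs N.
Proof.
move=> H; rewrite inE.
have -> : transl b = nu N b by apply: perm_ext => x; rewrite nuE H ap_transl; char2.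
exact: nuN.
Qed.

Lemma alpha_tvecs_l w x : w \in tvecs N -> alpha N w x = 0.
Proof. by move=> wW; rewrite alpha_sym alpha_tvecs. Qed.

(* W is Sigma_0-stable, as N is normalised by Sigma. *)
Lemma stable_tvecs : stable Sigma (tvecs N).
Proof.
move=> u uS u0 w; rewrite !inE => wN; case: admN => _ nNS _ _ _.
have := conj_transl_affine w (Sigma_affine SylS uS); rewrite u0 addr0 => <-.
by rewrite -mulgA -/(conjg _ _) memJ_norm // (subsetP nNS).
Qed.

Lemma alpha_equiv u b y : u \in Sigma -> ap u 0 = 0 ->
  alpha N (ap u b) (ap u y) = ap u (alpha N b y).
Proof.
move=> uS u0; have uD := stab0_additive SylS uS u0.
case: admN => _ nNS _ _ _.
have cN : (nu N b ^ u)%g \in N by rewrite memJ_norm ?nuN // (subsetP nNS).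
have nu_conj : nu N (ap u b) = (nu N b ^ u)%g.
  by rewrite (nu_eq cN) /conjg !apM -{1}u0 apK nu0.
by rewrite {1}/alpha nu_conj /conjg !apM apK nuE !uD; char2.
Qed.

End AdmissibleSubgroups.

Section IndexFour.
Variable n : nat.
Local Notation vT := 'rV['F_2]_n.
Local Notation P := {perm V n}.
Variable Sigma : {group P}.
Hypothesis SylS : (2.-Hall(AGL n) Sigma)%g.

Section OneSubgroup.
Variable N : {group P}.
Hypothesis admN : admissible Sigma N.
Local Notation W := (tvecs N).

(* If W <> V, then V = W + <f, g> where f + W is a Sigma_0-stable coset and
   alpha (f, g) <> 0: a vector x outside W + <f, g> would give a transvection
   u with u x = x + f fixing g and W, and equivariance of alpha would force
   alpha (f, g) = 0. *)
Lemma coset_pair : ~~ ([set: vT] \subset W) ->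
  exists f g, [/\ f \notin W,
    (forall u, u \in Sigma -> ap u 0 = 0 -> ap u f + f \in W),
    alpha N f g != 0 & forall x, x \in ext (ext W f) g].
Proof.
move=> nW; have stW := stable_tvecs SylS admN.
have [f [fW ffix]] := stable_coset SylS stW nW.
have [g gnz] : exists g, alpha N f g != 0.
  apply/existsP; apply: contraR fW => /existsPn alpha_f0.
  by apply: (alpha_radical admN) => x; apply/eqP; move: (alpha_f0 x); rewrite negbK.
exists f, g; split => // x; apply/negPn/negP => xE.
pose B := ext_group (tvecs_group N) f.
have stB : stable Sigma B.
  move=> u uS u0 d; rewrite !extE => /orP [dW|dfW]; first by rewrite stW.
  have -> : ap u d + f = ap u (d + f) + (ap u f + f).
    by rewrite (stab0_additive SylS uS u0); char2.
  by rewrite (@groupM _ (tvecs_group N)) ?orbT ?stW ?ffix.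
have [u [uS u0 ux uE]] := transvection SylS stB (ext_sub B g) (ext_mem _ _) xE.
have := alpha_equiv SylS admN x g uS u0.
rewrite ux (uE g (ext_mem _ _)) uE; last by rewrite !extE (alpha_in_tvecs SylS admN).
rewrite (alpha_additive_l SylS admN) => E.
by move/eqP: gnz; apply; apply: (addrI (alpha N x g)); rewrite addr0.
Qed.

Lemma index_tvecs : ~~ ([set: vT] \subset W) -> (4 * #|W| = 2 ^ n)%N.
Proof.
move=> nW; have [f [g [fW _ nz cov]]] := coset_pair nW.
have gB : g \notin ext W f.
  rewrite extE negb_or; apply/andP; split; apply: contra nz => H; apply/eqP.
    exact: (alpha_tvecs admN).
  rewrite (_ : g = (g + f) + f); last by rewrite addvK.
  by rewrite (alpha_additive SylS admN) (alpha_tvecs admN) // (alpha_alt admN) addr0.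
have -> : (2 ^ n)%N = #|ext_group (ext_group (tvecs_group N) f) g|.
  by rewrite -(card_vT n); apply: eq_card => x; rewrite inE cov.
by rewrite !card_ext // mulnA.
Qed.

Lemma alpha_fixed f g : f \notin W ->
  (forall u, u \in Sigma -> ap u 0 = 0 -> ap u f + f \in W) ->
  (forall x, x \in ext (ext W f) g) ->
  alpha N f g != 0 /\
  forall u, u \in Sigma -> ap u 0 = 0 -> ap u (alpha N f g) = alpha N f g.
Proof.
move=> fW ffix cov.
have aD := alpha_additive SylS admN f.
have nz : alpha N f g != 0.
  apply: contra fW => /eqP z; apply: (alpha_radical admN).
  by apply: (additive_vanish cov aD); rewrite ?(alpha_alt admN) // => w; exact: (alpha_tvecs admN).
split => // u uS u0.
have uf : ap u f = f + (ap u f + f) by char2.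
have Eq : alpha N f (ap u g) = ap u (alpha N f g).
  by rewrite -(alpha_equiv SylS admN f g uS u0) {1}uf (alpha_shift admN) ?ffix.
have nz' : alpha N f (ap u g) != 0.
  by rewrite Eq; apply: contra nz => /eqP; rewrite -{1}u0 => /ap_inj ->.
rewrite -Eq.
have hs a y : alpha N f y = alpha N f (y + a) + alpha N f a by rewrite aD addvK.
move: nz'; move: (cov (ap u g)); rewrite !extE.
case/orP => [/orP [gW|gfW] | /orP [ggW|ggfW]].
- by rewrite (alpha_tvecs admN) ?eqxx.
- by rewrite (hs f) (alpha_tvecs admN) // (alpha_alt admN) addr0 eqxx.
- by rewrite (hs g) (alpha_tvecs admN) ?add0r.
- by rewrite (hs g) (hs f (ap u g + g)) (alpha_tvecs admN) // (alpha_alt admN) !add0r.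
Qed.

End OneSubgroup.

Lemma alpha_agree (N1 N2 : {group P}) f g :
  admissible Sigma N1 -> admissible Sigma N2 -> tvecs N1 = tvecs N2 ->
  (forall x, x \in ext (ext (tvecs N1) f) g) ->
  alpha N1 f g = alpha N2 f g -> forall b x, alpha N1 b x = alpha N2 b x.
Proof.
move=> a1 a2 WW cov zz.
have W1 w x : w \in tvecs N1 -> alpha N1 x w = 0 by apply: (alpha_tvecs a1).
have W2 w x : w \in tvecs N1 -> alpha N2 x w = 0.
  by rewrite WW; apply: (alpha_tvecs a2).
have alphaD2 b a c : alpha N1 b (a + c) + alpha N2 b (a + c) =
    (alpha N1 b a + alpha N2 b a) + (alpha N1 b c + alpha N2 b c).
  by rewrite (alpha_additive SylS a1) (alpha_additive SylS a2); char2.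
have Df x : alpha N1 f x = alpha N2 f x.
  apply/eqP; rewrite -subr_eq0 oppv; apply/eqP; move: x.
  apply: (additive_vanish cov); first exact: alphaD2.
  - by move=> w wW; rewrite W1 ?W2 // addr0.
  - by rewrite (alpha_alt a1) (alpha_alt a2) addr0.
  - by rewrite zz addvv.
have Dg x : alpha N1 g x = alpha N2 g x.
  apply/eqP; rewrite -subr_eq0 oppv; apply/eqP; move: x.
  apply: (additive_vanish cov); first exact: alphaD2.
  - by move=> w wW; rewrite W1 ?W2 // addr0.
  - by rewrite (alpha_sym a1) (alpha_sym a2) zz addvv.
  - by rewrite (alpha_alt a1) (alpha_alt a2) addr0.
move=> b x; apply/eqP; rewrite -subr_eq0 oppv; apply/eqP; move: b.
apply: (additive_vanish cov (h := fun b => alpha N1 b x + alpha N2 b x)).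
- by move=> a c; rewrite (alpha_additive_l SylS a1) (alpha_additive_l SylS a2); char2.
- by move=> w wW; rewrite (alpha_tvecs_l a1) // (alpha_tvecs_l a2) -?WW ?addr0.
- by rewrite Df addvv.
- by rewrite Dg addvv.
Qed.

Lemma admissible_eq_alpha (N1 N2 : {group P}) :
  admissible Sigma N1 -> admissible Sigma N2 ->
  (forall b x, alpha N1 b x = alpha N2 b x) -> N1 :=: N2.
Proof.
move=> a1 a2 E12.
have Enu b : nu N1 b = nu N2 b by apply: perm_ext => x; rewrite nuE [RHS]nuE E12.
apply/eqP; rewrite eqEsubset; apply/andP; split; apply/subsetP => v vN.
  by rewrite (nu_eq a1 vN) Enu (nuN a2).
by rewrite (nu_eq a2 vN) -Enu (nuN a1).
Qed.

Lemma admissible_unique (N1 N2 : {group P}) :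
  admissible Sigma N1 -> admissible Sigma N2 ->
  ~~ ([set: vT] \subset tvecs N1) -> ~~ ([set: vT] \subset tvecs N2) -> N1 :=: N2.
Proof.
move=> a1 a2 nW1 nW2.
have WW : tvecs N1 = tvecs N2.
  apply: (stable_eq SylS (stable_tvecs SylS a1) (stable_tvecs SylS a2)).
  by apply/eqP; rewrite -(eqn_pmul2l (isT : (0 < 4)%N)) !index_tvecs.
have [f [g [fW ffix _ cov]]] := coset_pair a1 nW1.
have [nz1 fix1] := alpha_fixed a1 fW ffix cov.
have cov2 := cov; rewrite WW in fW ffix cov2.
have [nz2 fix2] := alpha_fixed a2 fW ffix cov2.
have zz : alpha N1 f g = alpha N2 f g := fixed_vector_unique SylS nz1 nz2 fix1 fix2.
exact: admissible_eq_alpha a1 a2 (alpha_agree a1 a2 WW cov zz).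
Qed.

End IndexFour.

Section ConjugatesOfT.
Variable n : nat.
Local Notation vT := 'rV['F_2]_n.
Local Notation P := {perm V n}.
Variable Sigma : {group P}.
Hypothesis SylS : (2.-Hall(AGL n) Sigma)%g.
Local Open Scope group_scope.

Lemma regular_subgroupP (X : {group P}) : regular_subgroup X ->
  (forall b, exists2 v, v \in X & ap v 0 = b) /\
  (forall v v', v \in X -> v' \in X -> ap v 0 = ap v' 0 -> v = v').
Proof.
case/andP => /andP [_ trX] /forallP stX; split.
  move=> b; have : (b : V n) \in orbit 'P X (0 : vT) by rewrite (atransP trX) ?inE.
  by case/imsetP => v vX ->; exists v.
move=> v v' vX v'X E.
have : (v * v'^-1)%g \in 'C_X[(0 : vT) | 'P]%g.
  rewrite inE groupM ?groupV //=; apply/astab1P.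
  by rewrite /= /aperm permM; change (ap v'^-1%g (ap v 0) = 0); rewrite E apK.
by rewrite (eqP (stX _)) inE => /eqP H; apply/eqP; rewrite eq_mulgV1 H.
Qed.

Lemma regular_conjT (g : P) : regular_subgroup (T n :^ g).
Proof.
rewrite /regular_subgroup (valP (T_group n :^ g)%G) /=; apply/andP; split.
  apply/imsetP; exists (0 : V n); rewrite ?inE //; apply/setP => b; rewrite inE.
  apply/esym/imsetP; exists (transl (ap g^-1%g b + ap g^-1%g 0) ^ g)%g.
    by rewrite memJ_conjg; apply/imsetP; exists (ap g^-1%g b + ap g^-1%g 0).
  rewrite /= /aperm -/(ap _ 0) /conjg !apM ap_transl.
  by rewrite (_ : _ + _ + _ = ap g^-1%g b) ?apKV //; char2.
apply/forallP => x; rewrite eqEsubset sub1G andbT; apply/subsetP => v.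
case/setIP => /imsetP [y /imsetP [a _ ->] ->] /astab1P.
rewrite /= /aperm -/(ap _ x) /conjg !apM ap_transl => E.
have a0 : a = 0.
  move/(congr1 (ap g^-1%g)): E; rewrite apK => E.
  by apply: (addIr (ap g^-1%g x)); rewrite add0r.
by rewrite a0 transl0 mul1g mulVg inE.
Qed.

Lemma conjT_admissible (g : P) : (T n :^ g <| Sigma)%g -> admissible Sigma (T n :^ g).
Proof.
case/andP => sTS nTS; split => //.
- by rewrite abelianJ (abelem_abelian (T_abelem n)).
- by move=> v /imsetP [x xT ->]; rewrite -conjMg T_mulxx ?conj1g.
- exact: (regular_subgroupP (regular_conjT g)).
Qed.

Lemma isTSigma_admissible (X : {set P}) : isTSigma Sigma X ->
  exists2 XG : {group P}, gval XG = X & admissible Sigma XG.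
Proof.
case/and4P => regX abX /andP [sXS nXS] _; have /andP [/andP [gX _] _] := regX.
exists (Group gX) => //; split => //.
- exact: abelem_abelian abX.
- move=> v vX; have [_ expX] := abelemP (isT : prime 2) (abX : 2.-abelem (Group gX)).
  by rewrite -(expX v vX) expgS expg1.
- exact: (regular_subgroupP (X := Group gX) regX).
Qed.

Lemma isTSigma_proper (X : {group P}) : (0 < n)%N -> isTSigma Sigma X ->
  admissible Sigma X -> ~~ ([set: vT] \subset tvecs X).
Proof.
move=> n0 /and4P [_ _ _ cTX] aX; apply/negP => sW.
move: cTX; rewrite (tvecs_full aX sW) setIid card_T eqn_exp2l // => /eqP nn2.
by move: (ltn_subrL 2 n); rewrite -nn2 ltnn n0.
Qed.

(* By uniqueness of admissible subgroups, T_Sigma is the only subgroup with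
   its defining property. *)
Lemma T_Sigma_eq (X : {set P}) : (0 < n)%N -> isTSigma Sigma X -> T_Sigma Sigma = X.
Proof.
move=> n0 tX; rewrite /T_Sigma; case: pickP => [Y tY | noY]; last first.
  by move: (noY X); rewrite tX.
have [XG XE aX] := isTSigma_admissible tX; have [YG YE aY] := isTSigma_admissible tY.
rewrite /= -XE -YE; apply: (admissible_unique SylS aY aX); apply: isTSigma_proper => //.
- by rewrite YE.
- by rewrite XE.
Qed.

(* T_Sigma is normal in Sigma whenever it is a nonempty set. *)
Lemma T_Sigma_normal (X : {group P}) : gval X = T_Sigma Sigma -> (X <| Sigma)%g.
Proof.
rewrite /T_Sigma; case: pickP => [Y /and4P [_ _ nY _] -> // | _ X0].
by have := group1 X; rewrite X0 inE.
Qed.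

(* A normal conjugate T^g <> T has |T :&: T^g| = |W| = 2^(n-2), so it has the
   defining property of T_Sigma. *)
Lemma conjT_isTSigma (g : P) : (2 <= n)%N -> (T n :^ g <| Sigma)%g ->
  T n :^ g != T n -> isTSigma Sigma (T n :^ g).
Proof.
move=> n2 nTS neT; pose N := (T_group n :^ g)%G.
have aN : admissible Sigma N := conjT_admissible nTS.
have nW : ~~ ([set: vT] \subset tvecs N).
  by apply: contra neT => sW; rewrite (tvecs_full aN sW).
have cW : #|tvecs N| = (2 ^ (n - 2))%N.
  apply/eqP; rewrite -(eqn_pmul2l (isT : (0 < 4)%N)) (index_tvecs SylS aN nW).
  by rewrite -{1}(subnKC n2) expnD.
rewrite /isTSigma regular_conjT abelemJ T_abelem nTS.
by rewrite (capT_tvecs N) cW eqxx.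
Qed.

End ConjugatesOfT.

Local Open Scope group_scope.

Theorem mainTheorem13 (n : nat) (g : {perm V n}) (Sigma : {group {perm V n}}) :
  (2 < n)%N ->
  Sigma \in 'Syl_2(AGL n) ->
  T n :^ g \subset Sigma ->
  (T n :^ g <| Sigma <-> T n :^ g \in [set T n; @T_Sigma n Sigma]).
Proof.
move=> n2; rewrite inE => SylS _; have n0 : (0 < n)%N by apply: ltn_trans n2.
split => [nTS | ].
  have [-> | neT] := eqVneq (T n :^ g) (T n); first by rewrite !inE eqxx.
  by rewrite !inE (T_Sigma_eq SylS n0 (conjT_isTSigma SylS (ltnW n2) nTS neT)) eqxx orbT.
rewrite !inE => /orP [/eqP -> | /eqP E]; first exact: T_normal_Sigma.
exact: (T_Sigma_normal (X := (T_group n :^ g)%G)).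
Qed.
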